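(* In the setting described in the context, let $w:\mathcal{K}(\mathbb{R}^n)\to\mathbb{R}$ satisfy $w(X)-w(F(X))=\beta(X)\,(1-w(X))$ for all $X\in\mathcal{K}(\mathbb{R}^n)$, where $\beta(X):=\exp(\Psi(X))-1$, be finite on $\mathcal{K}_{\mathcal{D}_{\mathcal{A}}}(\mathbb{R}^n)$, and satisfy $\lim_{k\to\infty}w(\mathcal{R}(X,k))=0$ for every $X\in\mathcal{K}_{\mathcal{D}_{\mathcal{A}}}(\mathbb{R}^n)$. Then $w(X)<1$ for all $X\in\mathcal{K}_{\mathcal{D}_{\mathcal{A}}}(\mathbb{R}^n)$.
   Context: Let $\|\cdot\|$ be a norm on $\mathbb{R}^n$ and $\mathrm{dist}(x,\Omega):=\inf_{y\in\Omega}\|x-y\|$. Let $\mathcal{K}(\mathbb{R}^n)$ denote the nonempty compact subsets of $\mathbb{R}^n$. Consider $x_{k+1}=f(x_k,u_k)$ with $f:\mathbb{R}^n\times\mathbb{R}^m\to\mathbb{R}^n$ continuous and inputs $u_k\in U$, $U\subset\mathbb{R}^m$ nonempty compact. Define $F(X):=\{f(x,u):x\in X,u\in U\}$ for $X\in\mathcal{K}(\mathbb{R}^n)$. For $x\in\mathbb{R}^n$ and $\pi:\mathbb{Z}_+\to U$, $\varphi_x^\pi(0)=x$, $\varphi_x^\pi(k+1)=f(\varphi_x^\pi(k),\pi(k))$; $\mathcal{R}(X,k):=\{\varphi_x^\pi(k):x\in X,\pi\in U^{\mathbb{Z}_+}\}$. Let $\mathcal{A}\in\mathcal{K}(\mathbb{R}^n)$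 be controlled invariant. Assume local $\ell_p$-stabilizability: there exist $r>0$, $M\ge1$, $p>0$, $\lambda:[0,r]\times\mathbb{Z}_+\to\mathbb{R}_+$ such that (1) for each $k$, $s\mapsto\lambda(s,k)$ is continuous, nondecreasing, $\lambda(0,k)=0$; for each $s$, $k\mapsto\lambda(s,k)$ is nonincreasing, $\lambda(s,0)\le s$; (2) $\sum_{k}\lambda(r,k)^p<\infty$; (3) for every $x$ with $\mathrm{dist}(x,\mathcal{A})\le r$ there is $\pi\in U^{\mathbb{Z}_+}$ with $\mathrm{dist}(\varphi_x^\pi(k),\mathcal{A})\le M\lambda(\mathrm{dist}(x,\mathcal{A}),k)$ for all $k$. Let $\mathcal{D}_{\mathcal{A}}:=\{x:\exists\pi\in U^{\mathbb{Z}_+},\ \lim_{k\to\infty}\mathrm{dist}(\varphi_x^\pi(k),\mathcal{A})=0\}$ and $\mathcal{K}_{\mathcal{D}_{\mathcal{A}}}(\mathbb{R}^n):=\{X\in\mathcal{K}(\mathbb{R}^n):X\cap\mathcal{D}_{\mathcal{A}}\neq\emptyset\}$. Let $\alpha:\mathbb{R}^n\to\mathbb{R}_+$ be continuous with $\underline{\alpha}\,\mathrm{dist}(x,\mathcal{A})^{\bar p}\le\alpha(x)\le\overline{\alpha}\,\mathrm{dist}(x,\mathcal{A})^{\bar p}$, constants $\underline{\alpha},\overline{\alpha}>0$, $\bar p\ge p$. Define $\Psi(X):=\inf_{y\in X}\alpha(y)$. *)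

From HB Require Import structures.
From mathcomp Require Import all_boot all_order all_algebra.
From mathcomp Require Import all_classical all_reals all_analysis.
Set Implicit Arguments. Unset Strict Implicit. Unset Printing Implicit Defensive.
Import Order.TTheory GRing.Theory Num.Theory.
Import numFieldNormedType.Exports.
Local Open Scope classical_set_scope.
Local Open Scope ring_scope.

Section Defs.
Variables (R : realType) (n m : nat).
Notation vec := 'rV[R]_n.
Notation inp := 'rV[R]_m.

Definition is_norm (N : vec -> R) : Prop :=
  (forall x, 0 <= N x) /\ (forall x, N x = 0 -> x = 0) /\
  (forall (a : R) x, N (a *: x) = `|a| * N x) /\
  (forall x y, N (x + y) <= N x + N y).

Definition dist (N : vec -> R) (x : vec) (Om : set vec) : R :=
  inf [set N (x - y) | y in Om].

Definition Kset (X : set vec) : Prop := compact X /\ X !=set0.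

Definition Fmap (f : vec -> inp -> vec) (U : set inp) (X : set vec) : set vec :=
  [set f x u | x in X & u in U].

Definition admissible (U : set inp) (pi : nat -> inp) : Prop :=
  forall k, U (pi k).

Fixpoint traj (f : vec -> inp -> vec) (x : vec) (pi : nat -> inp) (k : nat) : vec :=
  match k with
  | 0 => x
  | k'.+1 => f (traj f x pi k') (pi k')
  end.

Definition Reach (f : vec -> inp -> vec) (U : set inp) (X : set vec) (k : nat) : set vec :=
  [set y | exists x pi, X x /\ admissible U pi /\ y = traj f x pi k].

Definition controlled_invariant (f : vec -> inp -> vec) (U : set inp) (A : set vec) : Prop :=
  forall x, A x -> exists u, U u /\ A (f x u).

Definition local_lp_stabilizable (N : vec -> R) (f : vec -> inp -> vec) (U : set inp)
  (A : set vec) (r M p : R) (lam : R -> nat -> R) : Prop :=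
  0 < r /\ 1 <= M /\ 0 < p /\
  (forall s k, 0 <= s <= r -> 0 <= lam s k) /\
  (forall k, {within `[0, r], continuous (fun s => lam s k)}) /\
  (forall k s t, 0 <= s -> s <= t -> t <= r -> lam s k <= lam t k) /\
  (forall k, lam 0 k = 0) /\
  (forall s k l, 0 <= s <= r -> (k <= l)%N -> lam s l <= lam s k) /\
  (forall s, 0 <= s <= r -> lam s 0 <= s) /\
  (\sum_(0 <= k <oo) ((lam r k `^ p)%:E) < +oo)%E /\
  (forall x, dist N x A <= r -> exists pi, admissible U pi /\
     forall k, dist N (traj f x pi k) A <= M * lam (dist N x A) k).

Definition DA (N : vec -> R) (f : vec -> inp -> vec) (U : set inp) (A : set vec) : set vec :=
  [set x | exists pi, admissible U pi /\
     (fun k => dist N (traj f x pi k) A) @ \oo --> (0 : R)].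

Definition KsetD (N : vec -> R) (f : vec -> inp -> vec) (U : set inp) (A : set vec)
  (X : set vec) : Prop := Kset X /\ (X `&` DA N f U A) !=set0.

Definition Psi (alpha : vec -> R) (X : set vec) : R := inf [set alpha y | y in X].

Definition beta (alpha : vec -> R) (X : set vec) : R := expR (Psi alpha X) - 1.

End Defs.

From HB Require Import structures.
From mathcomp Require Import all_boot all_order all_algebra.
From mathcomp Require Import all_classical all_reals all_analysis.
From mathcomp Require Import lra.
Set Implicit Arguments. Unset Strict Implicit. Unset Printing Implicit Defensive.
Import Order.TTheory GRing.Theory Num.Theory.
Import numFieldNormedType.Exports.
Local Open Scope classical_set_scope.
Local Open Scope ring_scope.

(* The equation gives 1 - w(F X) = exp(Psi X) (1 - w X), so the region {w >= 1}
   is invariant under F and hence contains every reachable set R(X, k) once it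
   contains X; this contradicts w(R(X, k)) --> 0. Compactness of U and continuity
   of f only serve to keep every R(X, k) in K(R^n). *)

Lemma ge1_step (R : realFieldType) (e a b : R) :
  0 < e -> a - b = (e - 1) * (1 - a) -> 1 <= a -> 1 <= b.
Proof. nra. Qed.

Section Reachable.
Variables (R : realType) (n m : nat).
Variables (f : 'rV[R]_n -> 'rV[R]_m -> 'rV[R]_n) (U : set 'rV[R]_m).

Lemma traj_ext x (pi pi' : nat -> 'rV[R]_m) k :
  (forall j, (j < k)%N -> pi j = pi' j) -> traj f x pi k = traj f x pi' k.
Proof.
elim: k => [//|k IH] eq_pi /=.
by rewrite IH ?eq_pi // => j /ltnW; apply: eq_pi.
Qed.

Lemma Reach0 X : U !=set0 -> Reach f U X 0 = X.
Proof.
move=> [u0 Uu0]; apply/seteqP; split => y /=.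
  by move=> [x [pi [Xx [_ ->]]]].
by move=> Xy; exists y, (fun=> u0); split => //; split.
Qed.

Lemma ReachS X k : Reach f U X k.+1 = Fmap f U (Reach f U X k).
Proof.
apply/seteqP; split => y /=.
  move=> [x [pi [Xx [Upi ->]]]].
  by exists (traj f x pi k); [exists x, pi | exists (pi k)].
move=> [_ [x [pi [Xx [Upi ->]]]]] [u Uu <-].
exists x, (fun j => if j == k then u else pi j); split => //; split.
  by move=> j /=; case: ifP.
rewrite /= eqxx; congr f; apply: traj_ext => j ltjk.
by rewrite ltn_eqF.
Qed.

Hypotheses (f_cont : continuous (fun xu : 'rV[R]_n * 'rV[R]_m => f xu.1 xu.2))
  (U_compact : compact U) (U_neq0 : U !=set0).

Lemma Fmap_Kset X : Kset X -> Kset (Fmap f U X).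
Proof.
move=> [X_compact [x Xx]]; split; last first.
  by case: U_neq0 => u Uu; exists (f x u), x => //; exists u.
have -> : Fmap f U X = (fun xu => f xu.1 xu.2) @` (X `*` U).
  apply/seteqP; split => z /=.
    by move=> [y Xy [u Uu <-]]; exists (y, u).
  by move=> [[y u] [/= Xy Uu] <-]; exists y => //; exists u.
apply: continuous_compact; last exact: compact_setX.
exact: continuous_subspaceT.
Qed.

Lemma Reach_Kset X k : Kset X -> Kset (Reach f U X k).
Proof.
move=> KX; elim: k => [|k IH]; first by rewrite Reach0.
by rewrite ReachS; apply: Fmap_Kset.
Qed.

Lemma Reach_ge1 (alpha : 'rV[R]_n -> R) (w : set 'rV[R]_n -> R) X :
  (forall Y, Kset Y -> w Y - w (Fmap f U Y) = beta alpha Y * (1 - w Y)) ->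
  Kset X -> 1 <= w X -> forall k, 1 <= w (Reach f U X k).
Proof.
move=> w_eq KX wX k; elim: k => [|k IH]; first by rewrite Reach0.
by rewrite ReachS; apply: ge1_step (expR_gt0 _) (w_eq _ (Reach_Kset k KX)) IH.
Qed.

End Reachable.

Theorem lemma12 (R : realType) (n m : nat)
  (N : 'rV[R]_n -> R) (f : 'rV[R]_n -> 'rV[R]_m -> 'rV[R]_n) (U : set 'rV[R]_m)
  (A : set 'rV[R]_n) (r M p : R) (lam : R -> nat -> R)
  (alpha : 'rV[R]_n -> R) (alo ahi pbar : R)
  (w : set 'rV[R]_n -> R) :
  is_norm N ->
  continuous (fun xu : 'rV[R]_n * 'rV[R]_m => f xu.1 xu.2) ->
  compact U -> U !=set0 ->
  Kset A -> controlled_invariant f U A ->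
  local_lp_stabilizable N f U A r M p lam ->
  continuous alpha -> 0 < alo -> 0 < ahi -> p <= pbar ->
  (forall x, alo * dist N x A `^ pbar <= alpha x /\ alpha x <= ahi * dist N x A `^ pbar) ->
  (forall X, Kset X -> w X - w (Fmap f U X) = beta alpha X * (1 - w X)) ->
  (forall X, KsetD N f U A X -> (fun k => w (Reach f U X k)) @ \oo --> (0 : R)) ->
  forall X, KsetD N f U A X -> w X < 1.
Proof.
move=> _ f_cont U_compact U_neq0 _ _ _ _ _ _ _ _ w_eq w_lim X DX.
rewrite ltNge; apply/negP => wX_ge1.
have [k0 _ w_lt1] := cvgr_lt _ (w_lim X DX) 1 ltr01.
have := Reach_ge1 f_cont U_compact U_neq0 w_eq DX.1 wX_ge1 k0.
by rewrite leNgt (w_lt1 k0 (leqnn k0)).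
Qed.
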